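(* Let $P\subseteq\{\text{monotonic},\text{topped},\text{cufi}\}$ and let $\mathbf{L}_P$ be the least infinitary modal logic having all properties in $P$. Then for every formula $\varphi$ of the infinitary modal language: $\varphi\in\mathbf{L}_P$ if and only if $Z\models\varphi$ for every neighborhood frame $Z$ having all properties in $P$. In particular the least normal infinitary modal logic $\mathbf{K}_{\omega_1}$ (monotonic, topped and cufi) is sound and complete with respect to the class of monotonic, topped, cufi neighborhood frames.
   Context: Infinitary modal language: a countable set $\mathsf{Prop}$ of propositional variables, $\top,\bot$, $\neg$, $\Box$, and conjunction $\bigwedge\Gamma$ for every countable set $\Gamma$ of formulas. An infinitary modal logic is a set $\mathbf{L}$ of formulas containing all classical propositional tautologies, closed under substitution and modus ponens, such that: $\bigwedge\Gamma\supset\varphi\in\mathbf{L}$ for every countable $\Gamma$ and $\varphi\in\Gamma$; if $\psi\supset\varphi\in\mathbf{L}$ for all $\varphi\in\Gamma$ then $\psi\supset\bigwedge\Gamma\in\mathbf{L}$; and $\varphi\equiv\psi\in\mathbf{L}$ implies $\Box\varphi\equiv\Box\psi\in\mathbf{L}$. It is monotonic if it contains $\Box(p\land q)\supset\Box p\land\Box q$, topped if it contains $\Box\top$, cufi if it contains $\Box p\land\Box q\supset\Box(p\land q)$. A neighborhood frame is $\langle C,\mathcal{V}\rangle$ with $C\ne\emptyset$, $\mathcal{V}:C\to\mathcal{P}(\mathcal{P}(C))$; monotonic if each $\mathcal{V}(c)$ is upward closed under $\subseteq$, topped if $C\in\mathcal{V}(c)$ for all $c$, cufi if each $\mathcal{V}(c)$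 is closed under non-empty finite intersections. A valuation $v:\mathsf{Prop}\to\mathcal{P}(C)$ extends by $v(\top)=C$, $v(\bot)=\emptyset$, $v(\bigwedge\Gamma)=\bigcap_{\varphi\in\Gamma}v(\varphi)$, $v(\neg\varphi)=C\setminus v(\varphi)$, $c\in v(\Box\varphi)$ iff $v(\varphi)\in\mathcal{V}(c)$. $Z\models\varphi$ means $v(\varphi)=C$ for every valuation $v$ on $Z$. *)

From Stdlib Require Import List.
Import ListNotations.

(* A countable set Gamma of formulas is represented by an enumeration
   g : nat -> option form ; Gamma = { phi | exists n, g n = Some phi }.
   The option allows Gamma to be empty (or finite). *)
Inductive form : Type :=
| Var  : nat -> form
| Top  : form
| Bot  : form
| Neg  : form -> form
| Box  : form -> form
| Conj : (nat -> option form) -> form.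

Definition inC (g : nat -> option form) (phi : form) : Prop :=
  exists n, g n = Some phi.

Definition pair_seq (a b : form) : nat -> option form :=
  fun n => match n with 0 => Some a | _ => Some b end.
Definition And (a b : form) : form := Conj (pair_seq a b).
Definition Imp (a b : form) : form := Neg (And a (Neg b)).
Definition Iff (a b : form) : form := And (Imp a b) (Imp b a).

Fixpoint subst (s : nat -> form) (phi : form) : form :=
  match phi with
  | Var p => s p
  | Top => Top
  | Bot => Bot
  | Neg a => Neg (subst s a)
  | Box a => Box (subst s a)
  | Conj g => Conj (fun n => match g n with
                             | Some a => Some (subst s a)
                             | None => None end)
  end.

Fixpoint beval (av : nat -> Prop) (ab : form -> Prop) (phi : form) : Prop :=
  match phi with
  | Var p => av p
  | Top => True
  | Bot => False
  | Neg a => ~ beval av ab a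
  | Box a => ab a
  | Conj g => forall n, match g n with
                        | Some a => beval av ab a
                        | None => True end
  end.

Definition tautology (phi : form) : Prop :=
  forall av ab, beval av ab phi.

Definition is_logic (L : form -> Prop) : Prop :=
  (forall phi, tautology phi -> L phi) /\
  (forall s phi, L phi -> L (subst s phi)) /\
  (forall phi psi, L phi -> L (Imp phi psi) -> L psi) /\
  (forall g phi, inC g phi -> L (Imp (Conj g) phi)) /\
  (forall g psi, (forall phi, inC g phi -> L (Imp psi phi)) ->
                 L (Imp psi (Conj g))) /\
  (forall phi psi, L (Iff phi psi) -> L (Iff (Box phi) (Box psi))).

Inductive property : Type := Monotonic | Topped | Cufi.

Definition p0 := Var 0.
Definition p1 := Var 1.

Definition logic_has (L : form -> Prop) (x : property) : Prop :=
  match x with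
  | Monotonic => L (Imp (Box (And p0 p1)) (And (Box p0) (Box p1)))
  | Topped => L (Box Top)
  | Cufi => L (Imp (And (Box p0) (Box p1)) (Box (And p0 p1)))
  end.

Definition LP (P : property -> Prop) (phi : form) : Prop :=
  forall L, is_logic L -> (forall x, P x -> logic_has L x) -> L phi.

Record nframe : Type := NFrame {
  carrier :> Type;
  nonempty : inhabited carrier;
  nbhd : carrier -> (carrier -> Prop) -> Prop }.

Definition frame_has (Z : nframe) (x : property) : Prop :=
  match x with
  | Monotonic => forall c (X Y : Z -> Prop), nbhd Z c X ->
                   (forall y, X y -> Y y) -> nbhd Z c Y
  | Topped => forall c, nbhd Z c (fun _ => True)
  | Cufi => forall c (l : list (Z -> Prop)), l <> [] ->
              Forall (nbhd Z c) l ->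
              nbhd Z c (fun y => Forall (fun X => X y) l)
  end.

Fixpoint eval (Z : nframe) (v : nat -> Z -> Prop) (phi : form) : Z -> Prop :=
  match phi with
  | Var p => v p
  | Top => fun _ => True
  | Bot => fun _ => False
  | Neg a => fun c => ~ eval Z v a c
  | Box a => fun c => nbhd Z c (eval Z v a)
  | Conj g => fun c => forall n, match g n with
                                 | Some a => eval Z v a c
                                 | None => True end
  end.

Definition valid (Z : nframe) (phi : form) : Prop :=
  forall (v : nat -> Z -> Prop) (c : Z), eval Z v phi c.

(* Soundness: the formulas valid on every frame with the properties in P form
   an infinitary modal logic with those properties, so they contain L_P.

   Completeness: if phi is not in a logic L, refute it on a canonical frame
   built from the countable fragment of subformulas of phi.  Its worlds are
   the consistent L-theories that decide every subformula of phi and are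
   omega-complete for its conjunctions; a Lindenbaum construction along an
   enumeration of the fragment produces them, a refuted conjunction being
   witnessed at once by a refuted conjunct (a Rasiowa-Sikorski argument).
   Since the fragment is countable, only countably many conjunctions have to
   be witnessed.  The neighbourhoods of a world are the truth sets of the
   formulas it boxes, and the truth lemma goes through because inclusion of
   truth sets is provable implication. *)

From Stdlib Require Import List Classical ClassicalEpsilon
  FunctionalExtensionality PropExtensionality Cantor PeanoNat.
Import ListNotations.

Definition form_nested_ind (Pr : form -> Prop)
  (hV : forall p, Pr (Var p)) (hT : Pr Top) (hB : Pr Bot)
  (hN : forall a, Pr a -> Pr (Neg a)) (hX : forall a, Pr a -> Pr (Box a))
  (hC : forall g, (forall n a, g n = Some a -> Pr a) -> Pr (Conj g)) :
  forall phi, Pr phi.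
Proof.
  fix F 1. intros [p| | |a|a|g].
  - apply hV.
  - exact hT.
  - exact hB.
  - apply hN, F.
  - apply hX, F.
  - apply hC. intros n a E. destruct (g n) as [b|]; [|discriminate].
    injection E as <-. apply F.
Defined.

Lemma pred_ext {A : Type} (X Y : A -> Prop) : (forall y, X y <-> Y y) -> X = Y.
Proof.
  intro H. extensionality y. apply propositional_extensionality, H.
Qed.

Lemma beval_Neg av ab a : beval av ab (Neg a) <-> ~ beval av ab a.
Proof. reflexivity. Qed.

Lemma beval_Top av ab : beval av ab Top <-> True.
Proof. reflexivity. Qed.

Lemma beval_Bot av ab : beval av ab Bot <-> False.
Proof. reflexivity. Qed.

Lemma beval_And av ab a b :
  beval av ab (And a b) <-> beval av ab a /\ beval av ab b.
Proof.
  split.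
  - intro H. exact (conj (H 0) (H 1)).
  - intros [Ha Hb] [|n]; assumption.
Qed.

Lemma beval_Imp av ab a b :
  beval av ab (Imp a b) <-> (beval av ab a -> beval av ab b).
Proof.
  unfold Imp. rewrite beval_Neg, beval_And, beval_Neg.
  split; [intros H Ha; apply NNPP; tauto | tauto].
Qed.

Lemma beval_Iff av ab a b :
  beval av ab (Iff a b) <-> (beval av ab a <-> beval av ab b).
Proof. unfold Iff. rewrite beval_And, !beval_Imp. tauto. Qed.

Ltac prove_tautology :=
  let av := fresh "av" in let ab := fresh "ab" in
  intros av ab;
  repeat rewrite ?beval_Iff, ?beval_Imp, ?beval_And, ?beval_Neg, ?beval_Top, ?beval_Bot;
  apply NNPP; tauto.

Lemma subst_And s a b : subst s (And a b) = And (subst s a) (subst s b).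
Proof. unfold And. simpl. f_equal. extensionality n. destruct n; reflexivity. Qed.

Lemma subst_Imp s a b : subst s (Imp a b) = Imp (subst s a) (subst s b).
Proof. unfold Imp. cbn [subst]. rewrite subst_And. reflexivity. Qed.

Definition instance2 (a b : form) (n : nat) : form :=
  match n with 0 => a | 1 => b | _ => Var n end.

Section Logic.

Context {L : form -> Prop} (HL : is_logic L).

Lemma logic_taut a : tautology a -> L a.
Proof. apply HL. Qed.

Lemma logic_subst s a : L a -> L (subst s a).
Proof. apply HL. Qed.

Lemma logic_mp a b : L a -> L (Imp a b) -> L b.
Proof. apply HL. Qed.

Lemma logic_conj_elim g a : inC g a -> L (Imp (Conj g) a).
Proof. apply HL. Qed.

Lemma logic_conj_intro g c :
  (forall a, inC g a -> L (Imp c a)) -> L (Imp c (Conj g)).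
Proof. apply HL. Qed.

Lemma logic_box_congr a b : L (Iff a b) -> L (Iff (Box a) (Box b)).
Proof. apply HL. Qed.

Lemma logic_mp_taut a b : L a -> tautology (Imp a b) -> L b.
Proof. intros Ha Hab. exact (logic_mp a b Ha (logic_taut _ Hab)). Qed.

Lemma logic_mp2_taut a b c :
  L a -> L b -> tautology (Imp a (Imp b c)) -> L c.
Proof.
  intros Ha Hb Habc. exact (logic_mp b c Hb (logic_mp_taut a _ Ha Habc)).
Qed.

Lemma logic_imp_trans a b c : L (Imp a b) -> L (Imp b c) -> L (Imp a c).
Proof. intros Hab Hbc. apply (logic_mp2_taut _ _ _ Hab Hbc). prove_tautology. Qed.

Lemma logic_mono_instance a b : logic_has L Monotonic ->
  L (Imp (Box (And a b)) (And (Box a) (Box b))).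
Proof.
  intro Hm. apply (logic_subst (instance2 a b)) in Hm.
  rewrite subst_Imp in Hm. cbn [subst] in Hm. rewrite !subst_And in Hm. exact Hm.
Qed.

Lemma logic_cufi_instance a b : logic_has L Cufi ->
  L (Imp (And (Box a) (Box b)) (Box (And a b))).
Proof.
  intro Hc. apply (logic_subst (instance2 a b)) in Hc.
  rewrite subst_Imp in Hc. cbn [subst] in Hc. rewrite !subst_And in Hc. exact Hc.
Qed.

Lemma logic_box_mono a b :
  logic_has L Monotonic -> L (Imp a b) -> L (Imp (Box a) (Box b)).
Proof.
  intros Hm Hab.
  assert (Hcongr : L (Iff (Box a) (Box (And a b)))).
  { apply logic_box_congr, (logic_mp_taut _ _ Hab). prove_tautology. }
  apply (logic_mp2_taut _ _ _ Hcongr (logic_mono_instance a b Hm)).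
  prove_tautology.
Qed.

Lemma logic_box_equiv a b :
  L (Imp a b) -> L (Imp b a) -> L (Imp (Box a) (Box b)).
Proof.
  intros Hab Hba.
  assert (Hcongr : L (Iff (Box a) (Box b))).
  { apply logic_box_congr, (logic_mp2_taut _ _ _ Hab Hba). prove_tautology. }
  apply (logic_mp_taut _ _ Hcongr). prove_tautology.
Qed.

End Logic.

Lemma cufi_of_meet (Z : nframe) :
  (forall c X Y, nbhd Z c X -> nbhd Z c Y -> nbhd Z c (fun y => X y /\ Y y)) ->
  frame_has Z Cufi.
Proof.
  intros Hmeet c l. induction l as [|X l IH]; intros Hne Hall; [contradiction|].
  apply Forall_cons_iff in Hall as [HX Hl].
  destruct l as [|Y l].
  - replace (fun y => Forall (fun X => X y) [X]) with X; [exact HX|].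
    apply pred_ext. intro y. rewrite Forall_cons_iff. intuition.
  - replace (fun y => Forall (fun X => X y) (X :: Y :: l))
      with (fun y => X y /\ Forall (fun X => X y) (Y :: l))
      by (apply pred_ext; intro y; symmetry; apply Forall_cons_iff).
    apply Hmeet; [exact HX | apply IH; [discriminate | exact Hl]].
Qed.

Lemma meet_of_cufi (Z : nframe) c X Y : frame_has Z Cufi ->
  nbhd Z c X -> nbhd Z c Y -> nbhd Z c (fun y => X y /\ Y y).
Proof.
  intros Hcufi HX HY.
  replace (fun y => X y /\ Y y) with (fun y => Forall (fun X => X y) [X; Y]).
  - apply Hcufi; [discriminate | repeat constructor; assumption].
  - apply pred_ext. intro y. rewrite !Forall_cons_iff. intuition.
Qed.

(** * Soundness *)

Definition valid_in (P : property -> Prop) (phi : form) : Prop :=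
  forall Z : nframe, (forall x, P x -> frame_has Z x) -> valid Z phi.

Lemma eval_beval (Z : nframe) v c phi :
  eval Z v phi c <-> beval (fun p => v p c) (fun a => nbhd Z c (eval Z v a)) phi.
Proof.
  induction phi as [p| | |a IH|a IH|g IH] using form_nested_ind;
    simpl; try reflexivity.
  - rewrite IH. reflexivity.
  - split; intros H n; specialize (H n);
      destruct (g n) as [a|] eqn:E; trivial; apply (IH n a E); exact H.
Qed.

Lemma eval_And Z v a b c : eval Z v (And a b) c <-> eval Z v a c /\ eval Z v b c.
Proof. rewrite !eval_beval. apply beval_And. Qed.

Lemma eval_And_pred Z v a b :
  eval Z v (And a b) = fun c => eval Z v a c /\ eval Z v b c.
Proof. apply pred_ext. intro c. apply eval_And. Qed.

Lemma eval_Imp Z v a b c : eval Z v (Imp a b) c <-> (eval Z v a c -> eval Z v b c).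
Proof. rewrite !eval_beval. apply beval_Imp. Qed.

Lemma eval_Iff Z v a b c : eval Z v (Iff a b) c <-> (eval Z v a c <-> eval Z v b c).
Proof. rewrite !eval_beval. apply beval_Iff. Qed.

Lemma eval_subst Z v s phi c :
  eval Z v (subst s phi) c <-> eval Z (fun p => eval Z v (s p)) phi c.
Proof.
  revert c.
  induction phi as [p| | |a IH|a IH|g IH] using form_nested_ind;
    intro c; simpl; try reflexivity.
  - rewrite IH. reflexivity.
  - replace (eval Z v (subst s a)) with (eval Z (fun p => eval Z v (s p)) a)
      by (symmetry; apply pred_ext, IH).
    reflexivity.
  - split; intros H n; specialize (H n);
      destruct (g n) as [a|] eqn:E; trivial; apply (IH n a E); exact H.
Qed.

Lemma valid_in_logic P : is_logic (valid_in P).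
Proof.
  split; [|split; [|split; [|split; [|split]]]].
  - intros phi Ht Z _ v c. apply eval_beval, Ht.
  - intros s phi H Z HZ v c. apply eval_subst, H, HZ.
  - intros phi psi H1 H2 Z HZ v c.
    apply (eval_Imp Z v phi psi c); [apply H2 | apply H1]; exact HZ.
  - intros g phi [n E] Z _ v c. apply eval_Imp. intro H.
    specialize (H n). rewrite E in H. exact H.
  - intros g psi H Z HZ v c. apply eval_Imp. intros Hpsi n.
    destruct (g n) as [a|] eqn:E; [|trivial].
    apply (eval_Imp Z v psi a c); [apply H; [exists n; exact E | exact HZ] | exact Hpsi].
  - intros a b H Z HZ v c. apply eval_Iff. simpl.
    replace (eval Z v b) with (eval Z v a); [reflexivity|].
    apply pred_ext. intro y. apply eval_Iff, H, HZ.
Qed.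

Lemma valid_in_has P x : P x -> logic_has (valid_in P) x.
Proof.
  intro Px. destruct x; intros Z HZ v c; specialize (HZ _ Px); simpl in HZ.
  - apply eval_Imp. intro H. apply eval_And. cbn [eval] in H |- *.
    rewrite eval_And_pred in H.
    split; apply (HZ c _ _ H); intros y Hy; apply Hy.
  - apply HZ.
  - apply eval_Imp. intro H. apply eval_And in H as [H0 H1].
    cbn [eval]. rewrite eval_And_pred. exact (meet_of_cufi Z c _ _ HZ H0 H1).
Qed.

(** * Lindenbaum lemma for a countable fragment *)

Definition consistent (L : form -> Prop) (a : form) : Prop := ~ L (Neg a).

Definition range (e : nat -> form) (a : form) : Prop := exists k, e k = a.

Record saturated (L F t : form -> Prop) : Prop := {
  sat_logic : forall a, L a -> t a;
  sat_mp : forall a b, t a -> L (Imp a b) -> t b;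
  sat_and : forall a b, t a -> t b -> t (And a b);
  sat_consistent : ~ t Bot;
  sat_decides : forall a, F a -> t a \/ t (Neg a);
  sat_conj : forall g, F (Conj g) -> (forall a, inC g a -> t a) -> t (Conj g) }.

Section Saturated.

Context {L F t : form -> Prop} (HL : is_logic L) (Ht : saturated L F t).

Lemma sat_taut_mp a b : t a -> tautology (Imp a b) -> t b.
Proof. intros Ha Hab. exact (sat_mp _ _ _ Ht a b Ha (logic_taut HL _ Hab)). Qed.

Lemma sat_not_both a : t a -> t (Neg a) -> False.
Proof.
  intros Ha Hna. apply (sat_consistent _ _ _ Ht).
  apply (sat_taut_mp (And a (Neg a))).
  - apply (sat_and _ _ _ Ht); assumption.
  - prove_tautology.
Qed.

Lemma sat_And_iff a b : t (And a b) <-> t a /\ t b.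
Proof.
  split.
  - intro Hab. split; apply (sat_taut_mp _ _ Hab); prove_tautology.
  - intros [Ha Hb]. apply (sat_and _ _ _ Ht); assumption.
Qed.

End Saturated.

Section Lindenbaum.

Context {L : form -> Prop} (HL : is_logic L).

Lemma consistent_split d f :
  consistent L d -> consistent L (And d f) \/ consistent L (And d (Neg f)).
Proof.
  intro Hd. apply NNPP. intros Hboth. apply Hd.
  apply (logic_mp2_taut HL (Neg (And d f)) (Neg (And d (Neg f))));
    [apply NNPP; tauto | apply NNPP; tauto | prove_tautology].
Qed.

Lemma consistent_conj_counterexample d g :
  consistent L d -> ~ consistent L (And d (Conj g)) ->
  exists a, inC g a /\ consistent L (And d (Neg a)).
Proof.
  intros Hd Hdg. apply NNPP. intro Hnone. apply Hd.
  assert (Hdg' : L (Imp d (Conj g))).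
  { apply (logic_conj_intro HL). intros a Ha.
    assert (Hda : L (Neg (And d (Neg a)))) by (apply NNPP; eauto).
    apply (logic_mp_taut HL _ _ Hda). prove_tautology. }
  apply NNPP in Hdg.
  apply (logic_mp2_taut HL _ _ _ Hdg' Hdg). prove_tautology.
Qed.

Definition refuted_conjunct (d : form) (g : nat -> option form) : form :=
  epsilon (inhabits Top) (fun a => inC g a /\ consistent L (And d (Neg a))).

Lemma refuted_conjunct_spec d g :
  consistent L d -> ~ consistent L (And d (Conj g)) ->
  inC g (refuted_conjunct d g) /\ consistent L (And d (Neg (refuted_conjunct d g))).
Proof.
  intros Hd Hdg.
  exact (epsilon_spec (inhabits Top) _ (consistent_conj_counterexample d g Hd Hdg)).
Qed.

(* Refuting a conjunction through one of its conjuncts is what makes the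
   limit theory omega-complete. *)
Definition extend (d f : form) : form :=
  if excluded_middle_informative (consistent L (And d f)) then And d f
  else match f with
       | Conj g => And d (Neg (refuted_conjunct d g))
       | _ => And d (Neg f)
       end.

Lemma extend_consistent d f : consistent L d -> consistent L (extend d f).
Proof.
  intro Hd. unfold extend.
  destruct excluded_middle_informative as [Hdf|Hdf]; [exact Hdf|].
  assert (Hdnf : consistent L (And d (Neg f)))
    by (destruct (consistent_split d f Hd); tauto).
  destruct f as [| | | | |g]; try exact Hdnf.
  exact (proj2 (refuted_conjunct_spec d g Hd Hdf)).
Qed.

Lemma extend_imp d f : L (Imp (extend d f) d).
Proof.
  apply (logic_taut HL). unfold extend.
  destruct excluded_middle_informative; [|destruct f]; prove_tautology.
Qed.

Lemma extend_conj d g : consistent L d ->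
  L (Imp (extend d (Conj g)) (Conj g)) \/
  exists a, inC g a /\ L (Imp (extend d (Conj g)) (Neg a)).
Proof.
  intro Hd. unfold extend.
  destruct excluded_middle_informative as [Hdg|Hdg].
  - left. apply (logic_taut HL). prove_tautology.
  - right. exists (refuted_conjunct d g).
    split; [exact (proj1 (refuted_conjunct_spec d g Hd Hdg))|].
    apply (logic_taut HL). prove_tautology.
Qed.

Lemma extend_decides d f : consistent L d ->
  L (Imp (extend d f) f) \/ L (Imp (extend d f) (Neg f)).
Proof.
  intro Hd. destruct f as [| | | | |g]; try (unfold extend;
    destruct excluded_middle_informative; [left|right];
    apply (logic_taut HL); prove_tautology).
  destruct (extend_conj d g Hd) as [Hg|(a & Ha & Hna)]; [left; exact Hg|right].
  apply (logic_mp2_taut HL _ _ _ Hna (logic_conj_elim HL g a Ha)).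
  prove_tautology.
Qed.

Variables (e : nat -> form) (d0 : form).
Hypothesis d0_consistent : consistent L d0.

Fixpoint chain (k : nat) : form :=
  match k with 0 => d0 | S k => extend (chain k) (e k) end.

Definition limit (x : form) : Prop := exists k, L (Imp (chain k) x).

Lemma chain_consistent k : consistent L (chain k).
Proof. induction k; simpl; [|apply extend_consistent]; assumption. Qed.

Lemma chain_decreasing k m : L (Imp (chain (k + m)) (chain k)).
Proof.
  induction m as [|m IH].
  - rewrite Nat.add_0_r. apply (logic_taut HL). prove_tautology.
  - rewrite Nat.add_succ_r.
    exact (logic_imp_trans HL _ _ _ (extend_imp (chain (k + m)) (e (k + m))) IH).
Qed.

Lemma limit_mp a b : limit a -> L (Imp a b) -> limit b.
Proof.
  intros [k Hk] Hab. exists k. exact (logic_imp_trans HL _ _ _ Hk Hab).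
Qed.

Lemma limit_and a b : limit a -> limit b -> limit (And a b).
Proof.
  intros [k Hk] [m Hm]. exists (k + m).
  assert (Hmk := chain_decreasing m k). rewrite Nat.add_comm in Hmk.
  apply (logic_mp2_taut HL _ _ _ (logic_imp_trans HL _ _ _ (chain_decreasing k m) Hk)
    (logic_imp_trans HL _ _ _ Hmk Hm)).
  prove_tautology.
Qed.

Lemma limit_consistent : ~ limit Bot.
Proof.
  intros [k Hk]. apply (chain_consistent k).
  apply (logic_mp_taut HL _ _ Hk). prove_tautology.
Qed.

Lemma limit_saturated : saturated L (range e) limit.
Proof.
  split.
  - intros a Ha. exists 0. apply (logic_mp_taut HL _ _ Ha). prove_tautology.
  - exact limit_mp.
  - exact limit_and.
  - exact limit_consistent.
  - intros a [k <-].
    destruct (extend_decides _ (e k) (chain_consistent k)); [left|right];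
      exists (S k); assumption.
  - intros g [k Hk] Hall.
    destruct (extend_conj (chain k) g (chain_consistent k)) as [Hg|(a & Ha & Hna)];
      rewrite <- Hk in *.
    + exists (S k). exact Hg.
    + exfalso. apply limit_consistent.
      apply (limit_mp (And a (Neg a))); [|apply (logic_taut HL); prove_tautology].
      apply limit_and; [apply Hall, Ha | exists (S k); exact Hna].
Qed.

Lemma lindenbaum : exists t, saturated L (range e) t /\ t d0.
Proof.
  exists limit. split; [exact limit_saturated|].
  exists 0. apply (logic_taut HL). prove_tautology.
Qed.

End Lindenbaum.

(** * The countable fragment of subformulas *)

Definition child_at (x : form) (i : nat) : option form :=
  match x with
  | Neg a | Box a => Some a
  | Conj g => g i
  | _ => None
  end.

Definition subformula_closed (F : form -> Prop) : Prop :=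
  forall x i a, F x -> child_at x i = Some a -> F a.

(* [descend d phi c] follows a path of length at most [d] down from [phi],
   the child index at each step being read off [c] by Cantor unpairing. *)
Fixpoint descend (d : nat) (phi : form) (c : nat) : form :=
  match d with
  | 0 => phi
  | S d =>
      let (i, c) := of_nat c in
      match child_at phi i with Some a => descend d a c | None => phi end
  end.

Definition subformulas (phi : form) (k : nat) : form :=
  let (d, c) := of_nat k in descend d phi c.

Lemma subformulas_self phi : range (subformulas phi) phi.
Proof. exists (to_nat (0, 0)). unfold subformulas. rewrite cancel_of_to. reflexivity. Qed.

Lemma descend_child d : forall phi c i a,
  child_at (descend d phi c) i = Some a -> exists d' c', descend d' phi c' = a.
Proof.
  assert (Hroot : forall phi i a, child_at phi i = Some a ->
            exists d' c', descend d' phi c' = a).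
  { intros phi i a Ha. exists 1, (to_nat (i, 0)).
    cbn [descend]. rewrite cancel_of_to, Ha. reflexivity. }
  induction d as [|d IH]; intros phi c i a Ha; [exact (Hroot _ _ _ Ha)|].
  simpl in Ha. destruct (of_nat c) as [j c'].
  destruct (child_at phi j) as [b|] eqn:Hb; [|exact (Hroot _ _ _ Ha)].
  destruct (IH b c' i a Ha) as (d' & c'' & Hd).
  exists (S d'), (to_nat (j, c'')). cbn [descend]. rewrite cancel_of_to, Hb. exact Hd.
Qed.

Lemma subformulas_closed phi : subformula_closed (range (subformulas phi)).
Proof.
  intros x i a [k <-] Ha. unfold subformulas in Ha. destruct (of_nat k) as [d c].
  destruct (descend_child d phi c i a Ha) as (d' & c' & Hd).
  exists (to_nat (d', c')). unfold subformulas. rewrite cancel_of_to. exact Hd.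
Qed.

(** * The canonical frame *)

Section Canonical.

Context {L : form -> Prop} (HL : is_logic L) (P : property -> Prop)
  (HP : forall x, P x -> logic_has L x) (e : nat -> form).

Definition world : Type := {t : form -> Prop | saturated L (range e) t}.

Definition holds (a : form) (w : world) : Prop := proj1_sig w a.

Lemma holds_saturated (w : world) : saturated L (range e) (fun a => holds a w).
Proof. exact (proj2_sig w). Qed.

Lemma holds_incl_provable a b :
  (forall w, holds a w -> holds b w) -> L (Imp a b).
Proof.
  intro Hab. apply NNPP. intro Hnab.
  assert (Hc : consistent L (And a (Neg b))).
  { intro H. apply Hnab, (logic_mp_taut HL _ _ H). prove_tautology. }
  destruct (lindenbaum HL e _ Hc) as (t & Ht & Hanb).
  apply (sat_And_iff HL Ht) in Hanb as [Ha Hnb].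
  exact (sat_not_both HL Ht b (Hab (exist _ t Ht) Ha) Hnb).
Qed.

(* Without monotonicity the neighbourhoods of [w] are exactly the truth sets
   of the formulas boxed in [w]; with it, all their supersets. *)
Definition canonical_nbhd (w : world) (X : world -> Prop) : Prop :=
  exists a, holds (Box a) w /\ (forall u, holds a u -> X u) /\
    (~ P Monotonic -> forall u, X u -> holds a u).

Definition canonical_frame (w0 : world) : nframe :=
  NFrame world (inhabits w0) canonical_nbhd.

Definition canonical_valuation (p : nat) : world -> Prop := holds (Var p).

Lemma canonical_nbhd_holds w a : canonical_nbhd w (holds a) <-> holds (Box a) w.
Proof.
  split.
  - intros (b & Hb & Hba & Hab).
    apply (sat_mp _ _ _ (holds_saturated w) (Box b)); [exact Hb|].
    destruct (classic (P Monotonic)) as [Hm|Hm].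
    + exact (logic_box_mono HL _ _ (HP _ Hm) (holds_incl_provable _ _ Hba)).
    + exact (logic_box_equiv HL _ _ (holds_incl_provable _ _ Hba)
               (holds_incl_provable _ _ (Hab Hm))).
  - intro Ha. exists a. split; [exact Ha|]. split; intros; assumption.
Qed.

Lemma canonical_nbhd_meet w X Y : logic_has L Cufi ->
  canonical_nbhd w X -> canonical_nbhd w Y ->
  canonical_nbhd w (fun u => X u /\ Y u).
Proof.
  intros Hcufi (a & Ha & HaX & HXa) (b & Hb & HbY & HYb).
  exists (And a b). split; [|split].
  - apply (sat_mp _ _ _ (holds_saturated w) (And (Box a) (Box b))).
    + apply (sat_and _ _ _ (holds_saturated w)); assumption.
    + exact (logic_cufi_instance HL a b Hcufi).
  - intros u Hu. apply (sat_And_iff HL (holds_saturated u)) in Hu as [Hua Hub].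
    split; [apply HaX | apply HbY]; assumption.
  - intros Hm u [HXu HYu]. apply (sat_And_iff HL (holds_saturated u)).
    split; [apply HXa | apply HYb]; assumption.
Qed.

Lemma canonical_frame_has w0 x : P x -> frame_has (canonical_frame w0) x.
Proof.
  intro Px. destruct x.
  - intros w X Y (a & Ha & HaX & _) HXY.
    exists a. split; [exact Ha|]. split; [|contradiction].
    intros u Hu. apply HXY, HaX, Hu.
  - intro w. simpl. replace (fun _ : world => True) with (holds Top).
    + apply canonical_nbhd_holds, (sat_logic _ _ _ (holds_saturated w)).
      exact (HP Topped Px).
    + apply pred_ext. intro u. split; [trivial|intros _].
      apply (sat_logic _ _ _ (holds_saturated u)), (logic_taut HL).
      prove_tautology.
  - apply cufi_of_meet. intros w X Y. apply canonical_nbhd_meet, (HP Cufi Px).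
Qed.

Hypothesis e_closed : subformula_closed (range e).

Lemma truth_lemma w0 a : range e a ->
  forall w, eval (canonical_frame w0) canonical_valuation a w <-> holds a w.
Proof.
  induction a as [p| | |a IH|a IH|g IH] using form_nested_ind;
    intros Ha w; pose proof (holds_saturated w) as Hw; simpl.
  - reflexivity.
  - split; [intros _ | trivial].
    apply (sat_logic _ _ _ Hw), (logic_taut HL). prove_tautology.
  - split; [contradiction | apply (sat_consistent _ _ _ Hw)].
  - assert (Ha' : range e a) by exact (e_closed _ 0 _ Ha eq_refl).
    rewrite (IH Ha' w). split.
    + intro Hna. destruct (sat_decides _ _ _ Hw a Ha'); tauto.
    + intros Hna Hwa. exact (sat_not_both HL Hw a Hwa Hna).
  - assert (Ha' : range e a) by exact (e_closed _ 0 _ Ha eq_refl).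
    replace (eval (canonical_frame w0) canonical_valuation a) with (holds a)
      by (symmetry; apply pred_ext, IH, Ha').
    apply canonical_nbhd_holds.
  - assert (Hsub : forall n b, g n = Some b -> range e b)
      by (intros n b E; exact (e_closed _ n _ Ha E)).
    split.
    + intro Hg. apply (sat_conj _ _ _ Hw g Ha). intros b [n E].
      specialize (Hg n). rewrite E in Hg. exact (proj1 (IH n b E (Hsub n b E) w) Hg).
    + intros Hg n. destruct (g n) as [b|] eqn:E; [|trivial].
      apply (IH n b E (Hsub n b E) w), (sat_mp _ _ _ Hw (Conj g) b Hg).
      apply (logic_conj_elim HL). exists n. exact E.
Qed.

End Canonical.

(** * Completeness *)

Theorem completeness {L : form -> Prop} (HL : is_logic L) (P : property -> Prop)
  (HP : forall x, P x -> logic_has L x) phi : valid_in P phi -> L phi.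
Proof.
  intro Hvalid. apply NNPP. intro Hphi.
  assert (Hc : consistent L (Neg phi)).
  { intro H. apply Hphi, (logic_mp_taut HL _ _ H). prove_tautology. }
  destruct (lindenbaum HL (subformulas phi) _ Hc) as (t & Ht & Hneg).
  set (w := exist _ t Ht : world (L := L) (subformulas phi)).
  assert (Hw := Hvalid _ (canonical_frame_has HL P HP _ w) (canonical_valuation _) w).
  apply (truth_lemma HL P HP _ (subformulas_closed phi) w phi (subformulas_self phi))
    in Hw.
  exact (sat_not_both HL Ht phi Hw Hneg).
Qed.

Lemma LP_logic P : is_logic (LP P).
Proof.
  split; [|split; [|split; [|split; [|split]]]]; unfold LP.
  - intros phi Ht L HL _. exact (logic_taut HL _ Ht).
  - intros s phi H L HL HP. exact (logic_subst HL s _ (H L HL HP)).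
  - intros phi psi H1 H2 L HL HP. exact (logic_mp HL _ _ (H1 L HL HP) (H2 L HL HP)).
  - intros g phi Hg L HL _. exact (logic_conj_elim HL g _ Hg).
  - intros g psi H L HL HP. apply (logic_conj_intro HL). intros phi Hphi.
    exact (H phi Hphi L HL HP).
  - intros a b H L HL HP. exact (logic_box_congr HL _ _ (H L HL HP)).
Qed.

Lemma LP_has P x : P x -> logic_has (LP P) x.
Proof. intros Px. destruct x; intros L _ HP; exact (HP _ Px). Qed.

Theorem mainTheorem12 (P : property -> Prop) (phi : form) :
  LP P phi <->
  (forall Z : nframe, (forall x, P x -> frame_has Z x) -> valid Z phi).
Proof.
  split.
  - intro H. exact (H (valid_in P) (valid_in_logic P) (valid_in_has P)).
  - exact (completeness (LP_logic P) P (LP_has P) phi).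
Qed.
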